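(* Fix $i\in\{1,2,3\}$ and constants $\sigma>0,\lambda>0,\rho>0$ with $\rho^{-2}\sigma<1$ and $\rho\le\lambda-2\rho^{-1}\sigma(1-\rho^{-2}\sigma)^{-1}$. Suppose that for some $p\in\mathbb{Z}_{>0}$ the matrix $\Theta_{p,i}$ satisfies $\Theta_{p,i}^{12}\Theta_{p,i}^{21}\le\sigma I$, $\Theta_{p,i}^{21}\Theta_{p,i}^{12}\le\sigma I$, $\Theta_{p,i}^{11}+\Theta_{p,i}^{22}\ge\lambda I$. Then for all $k\in\mathbb{Z}_{>0}$, $\Theta_{(k+1)p,i}^{11}\le\Theta_{kp,i}^{11}$, $\Theta_{(k+1)p,i}^{22}\le\Theta_{kp,i}^{22}$, $\Theta_{(k+1)p,i}^{12}\Theta_{(k+1)p,i}^{21}\le\Theta_{kp,i}^{12}\Theta_{kp,i}^{21}$, and $\Theta_{(k+1)p,i}^{21}\Theta_{(k+1)p,i}^{12}\le\Theta_{kp,i}^{21}\Theta_{kp,i}^{12}$.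
   Context: For the linear regulator problem with dynamics $x_{k+1}=Ax_k+Bw_k$ ($x_k\in\mathbb{R}^n$), running payoff $\tfrac12x^T\Phi x-\tfrac{\gamma^2}{2}|w|^2$ and basis functions $\psi^1(x,z)=z^Tx$, $\psi^2(x,z)=-\tfrac12(x-z)^TM(x-z)$, $\psi^3(x,z)=\delta(x-z)$, let $\mathrm{S}_{k,i}(x,z)$ be the $k$-step dynamic programming evolution of $\psi^i(\cdot,z)$ evaluated at $x$, and $\mathrm{B}_{k,i}(y,z)=-\sup_x\{\psi^i(x,y)-\mathrm{S}_{k,i}(x,z)\}=-\tfrac12[y;z]^T\Theta_{k,i}[y;z]$, with $\Theta_{k,i}=\begin{bmatrix}\Theta_{k,i}^{11}&\Theta_{k,i}^{12}\\\Theta_{k,i}^{21}&\Theta_{k,i}^{22}\end{bmatrix}$ symmetric ($n\times n$ blocks). These matrices satisfy $\Theta_{k_1+k_2,i}=\Theta_{k_1,i}\circledast\Theta_{k_2,i}$, where for symmetric $\Omega_1,\Omega_2\in\mathbb{R}^{2n\times2n}$ with $\Omega_1^{22}+\Omega_2^{11}>0$, $\Omega_1\circledast\Omega_2=\begin{bmatrix}\Omega_1^{11}&0\\0&\Omega_2^{22}\end{bmatrix}-\begin{bmatrix}\Omega_1^{12}\\\Omega_2^{21}\end{bmatrix}(\Omega_1^{22}+\Omega_2^{11})^{-1}\begin{bmatrix}\Omega_1^{21}&\Omega_2^{12}\end{bmatrix}$. *)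

From mathcomp Require Import all_boot all_order all_algebra.
Set Implicit Arguments. Unset Strict Implicit. Unset Printing Implicit Defensive.
Import Order.TTheory GRing.Theory Num.Theory.
Local Open Scope ring_scope.

Section Defs.
Variable R : realFieldType.

Definition qform n (A : 'M[R]_n) (v : 'cV[R]_n) : R := (v^T *m A *m v) 0 0.

Definition lemx n (A B : 'M[R]_n) : Prop := forall v : 'cV[R]_n, 0 <= qform (B - A) v.

Definition posdefmx n (A : 'M[R]_n) : Prop :=
  forall v : 'cV[R]_n, v != 0 -> 0 < qform A v.

Definition blk11 n (O : 'M[R]_(n + n)) : 'M[R]_n := ulsubmx O.
Definition blk12 n (O : 'M[R]_(n + n)) : 'M[R]_n := ursubmx O.
Definition blk21 n (O : 'M[R]_(n + n)) : 'M[R]_n := dlsubmx O.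
Definition blk22 n (O : 'M[R]_(n + n)) : 'M[R]_n := drsubmx O.

Definition circ_star n (O1 O2 : 'M[R]_(n + n)) : 'M[R]_(n + n) :=
  block_mx (blk11 O1) 0 0 (blk22 O2)
  - col_mx (blk12 O1) (blk21 O2) *m invmx (blk22 O1 + blk11 O2)
      *m row_mx (blk21 O1) (blk12 O2).

End Defs.

(* Write Theta_{(k+1)p} as Theta_{kp} ⊛ Theta_p or as Theta_p ⊛ Theta_{kp}. Each
   block of the result is a block of Theta_{kp} corrected by a Schur-complement term
   with pivot M = Theta^22 + Theta^11 of the two factors. By induction on k every such
   pivot satisfies M >= rho I: the new pivot is Theta^11_p + Theta^22_p >= lambda I
   minus Y M^-1 Y^T <= (sigma / rho) I, and lambda - sigma / rho >= rho. Given M >= rho I,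
   the diagonal corrections X M^-1 X^T are nonnegative, and for the off-diagonal
   products (X M^-1 C)(X M^-1 C)^T <= sigma X M^-1 M^-T X^T <= X X^T because
   |M^T w| >= rho |w| and sigma <= rho^2. *)

Set Warnings "-notation-overridden,-ambiguous-paths".
From mathcomp Require Import all_boot all_order all_algebra.
From mathcomp Require Import ring lra.
Set Implicit Arguments. Unset Strict Implicit. Unset Printing Implicit Defensive.
Import Order.TTheory GRing.Theory Num.Theory.
Local Open Scope ring_scope.

Section InnerProduct.
Variables (R : realFieldType) (n : nat).
Implicit Types (u v w : 'cV[R]_n) (A B Y : 'M[R]_n).

Definition dot u v : R := (u^T *m v) 0 0.

Lemma dotC u v : dot u v = dot v u.
Proof. by rewrite /dot -[u^T *m v]trmxK trmx_mul trmxK mxE. Qed.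

Lemma dotDr u v w : dot u (v + w) = dot u v + dot u w.
Proof. by rewrite /dot mulmxDr mxE. Qed.

Lemma dotZr u v c : dot u (c *: v) = c * dot u v.
Proof. by rewrite /dot -scalemxAr mxE. Qed.

Lemma dotDl u v w : dot (v + w) u = dot v u + dot w u.
Proof. by rewrite ![dot _ u]dotC dotDr. Qed.

Lemma dotZl u v c : dot (c *: v) u = c * dot v u.
Proof. by rewrite ![dot _ u]dotC dotZr. Qed.

Lemma dotr0 u : dot u 0 = 0.
Proof. by rewrite /dot mulmx0 mxE. Qed.

Lemma dot_mulmxr u A v : dot u (A *m v) = dot (A^T *m u) v.
Proof. by rewrite /dot trmx_mul trmxK mulmxA. Qed.

Lemma dotE u v : dot u v = \sum_i u i 0 * v i 0.
Proof. by rewrite /dot mxE; apply: eq_bigr => i _; rewrite mxE. Qed.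

Lemma dot_ge0 v : 0 <= dot v v.
Proof. by rewrite dotE; apply: sumr_ge0 => i _; rewrite -expr2 sqr_ge0. Qed.

Lemma dot_eq0 v : (dot v v == 0) = (v == 0).
Proof.
apply/eqP/eqP => [|->]; last by rewrite dotE big1 // => i _; rewrite mxE mul0r.
rewrite dotE => /psumr_eq0P v2_0; apply/matrixP => i j; rewrite (ord1 j) mxE.
by apply/eqP; rewrite -sqrf_eq0 expr2 v2_0 // => k _; rewrite -expr2 sqr_ge0.
Qed.

Lemma qformE A v : qform A v = dot v (A *m v).
Proof. by rewrite /qform /dot mulmxA. Qed.

Lemma qformD A B v : qform (A + B) v = qform A v + qform B v.
Proof. by rewrite !qformE mulmxDl dotDr. Qed.

Lemma qformZ c A v : qform (c *: A) v = c * qform A v.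
Proof. by rewrite !qformE -scalemxAl dotZr. Qed.

Lemma qformN A v : qform (- A) v = - qform A v.
Proof. by rewrite -scaleN1r qformZ mulN1r. Qed.

Lemma qformB A B v : qform (A - B) v = qform A v - qform B v.
Proof. by rewrite qformD qformN. Qed.

Lemma qform_scalar c v : qform c%:M v = c * dot v v.
Proof. by rewrite qformE mul_scalar_mx dotZr. Qed.

Lemma qform_tr A v : qform A^T v = qform A v.
Proof. by rewrite !qformE dot_mulmxr trmxK dotC. Qed.

Lemma qform_conj Y A v : qform (Y *m A *m Y^T) v = qform A (Y^T *m v).
Proof. by rewrite !qformE -!mulmxA dot_mulmxr. Qed.

End InnerProduct.

Section Loewner.
Variables (R : realFieldType) (n : nat).
Implicit Types (A B C D Y : 'M[R]_n).

Lemma lemxP A B : lemx A B <-> forall v, qform A v <= qform B v.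
Proof. by split=> H v; have := H v; rewrite qformB subr_ge0. Qed.

Lemma lemx_refl A : lemx A A.
Proof. by apply/lemxP. Qed.

Lemma lemx_trans B A C : lemx A B -> lemx B C -> lemx A C.
Proof. by move=> /lemxP AB /lemxP BC; apply/lemxP => v; apply: le_trans (AB v) (BC v). Qed.

Lemma lemxB A B C D : lemx A B -> lemx C D -> lemx (A - D) (B - C).
Proof. by move=> /lemxP AB /lemxP CD; apply/lemxP => v; rewrite !qformB lerB. Qed.

Lemma lemx_subl A B : lemx 0 B -> lemx (A - B) A.
Proof. by move=> B_ge0; rewrite -[X in lemx _ X]subr0; apply: lemxB (lemx_refl A) B_ge0. Qed.

Lemma lemx_scalar a b : a <= b -> lemx (a%:M : 'M[R]_n) b%:M.
Proof. by move=> ab; apply/lemxP => v; rewrite !qform_scalar ler_wpM2r ?dot_ge0. Qed.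

Lemma lemx_scale c A B : 0 <= c -> lemx A B -> lemx (c *: A) (c *: B).
Proof. by move=> c_ge0 /lemxP AB; apply/lemxP => v; rewrite !qformZ ler_wpM2l. Qed.

Lemma lemx_conj Y A B : lemx A B -> lemx (Y *m A *m Y^T) (Y *m B *m Y^T).
Proof. by move=> /lemxP AB; apply/lemxP => v; rewrite !qform_conj. Qed.

Lemma lemx_tr A B : lemx A B -> lemx A^T B^T.
Proof. by move=> /lemxP AB; apply/lemxP => v; rewrite !qform_tr. Qed.

End Loewner.

Section LowerBounded.
Variables (R : realFieldType) (n : nat) (rho : R) (M : 'M[R]_n).
Hypotheses (rho_gt0 : 0 < rho) (M_ge : lemx rho%:M M).

Lemma dot_lemx_ge w : rho * dot w w <= dot w (M *m w).
Proof. by have /lemxP := M_ge; move/(_ w); rewrite qform_scalar qformE. Qed.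

(* Write M w = D w + rho w with D = M - rho I; then
   |M w|^2 - rho <w, M w> = |D w|^2 + rho <w, D w> >= 0. *)
Lemma dot_lemx_mulmx w : rho * dot w (M *m w) <= dot (M *m w) (M *m w).
Proof.
set D := M - rho%:M.
have eM : M *m w = D *m w + rho *: w by rewrite /D mulmxBl mul_scalar_mx subrK.
have Dw_ge0 : 0 <= dot w (D *m w).
  by rewrite /D mulmxBl mul_scalar_mx dotDr -scaleNr dotZr mulNr subr_ge0 dot_lemx_ge.
have := dot_ge0 (D *m w).
rewrite eM !dotDr !dotDl !dotZr !dotZl (dotC (D *m w) w) -subr_ge0.
have := mulr_ge0 (ltW rho_gt0) Dw_ge0; nra.
Qed.

Lemma dot_lemx_sqr w : rho ^+ 2 * dot w w <= dot (M *m w) (M *m w).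
Proof.
rewrite expr2 -mulrA; apply: le_trans (dot_lemx_mulmx w).
by rewrite ler_wpM2l ?dot_lemx_ge ?ltW.
Qed.

Lemma lemx_unitmx : M \in unitmx.
Proof.
rewrite -unitmx_tr unitmxE unitfE; apply/det0P => -[u u_neq0 uM].
have Mu0 : M *m u^T = 0 by rewrite -[M]trmxK -trmx_mul uM trmx0.
have := dot_lemx_ge u^T; rewrite Mu0 dotr0 pmulr_rle0 // => u_le0.
have : dot u^T u^T == 0 by rewrite eq_le u_le0 dot_ge0.
rewrite dot_eq0 => /eqP/(congr1 trmx).
by rewrite trmxK trmx0 => u0; rewrite u0 eqxx in u_neq0.
Qed.

End LowerBounded.

Section Inverse.
Variables (R : realFieldType) (n : nat) (rho : R) (M : 'M[R]_n).
Hypotheses (rho_gt0 : 0 < rho) (M_ge : lemx rho%:M M).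

Lemma qform_invmx u : qform (invmx M) u = qform M (invmx M *m u).
Proof. by rewrite !qformE -{1}(mulKVmx (lemx_unitmx rho_gt0 M_ge) u) dotC. Qed.

Lemma lemx_invmx_ge0 : lemx 0 (invmx M).
Proof.
move=> u; rewrite subr0 qform_invmx qformE; apply: le_trans (dot_lemx_ge M_ge _).
by rewrite mulr_ge0 ?dot_ge0 ?ltW.
Qed.

Lemma lemx_invmx_le : lemx (invmx M) rho^-1%:M.
Proof.
apply/lemxP => u; rewrite qform_invmx qform_scalar qformE.
set w := invmx M *m u; have <- : M *m w = u := mulKVmx (lemx_unitmx rho_gt0 M_ge) u.
by rewrite ler_pdivlMl // dot_lemx_mulmx.
Qed.

Lemma lemx_invmx_mul_tr : lemx (invmx M *m (invmx M)^T) (rho ^- 2)%:M.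
Proof.
have MT_ge : lemx rho%:M M^T by rewrite -[rho%:M]tr_scalar_mx; apply: lemx_tr.
apply/lemxP => u; rewrite qformE qform_scalar -mulmxA dot_mulmxr trmx_inv.
set w := invmx M^T *m u; have <- : M^T *m w = u := mulKVmx (lemx_unitmx rho_gt0 MT_ge) u.
by rewrite ler_pdivlMl ?exprn_gt0 // dot_lemx_sqr.
Qed.

Lemma lemx_sub_conj_invmx (A X : 'M[R]_n) : lemx (A - X *m invmx M *m X^T) A.
Proof.
by apply: lemx_subl; have := lemx_conj X lemx_invmx_ge0; rewrite mulmx0 mul0mx.
Qed.

Lemma lemx_conj_invmx (sigma : R) (Y : 'M[R]_n) :
  lemx (Y *m Y^T) sigma%:M -> lemx (Y *m invmx M *m Y^T) (sigma / rho)%:M.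
Proof.
move=> YY_le; apply: (lemx_trans (lemx_conj Y lemx_invmx_le)).
rewrite mul_mx_scalar -scalemxAl mulrC -scale_scalar_mx.
by apply: lemx_scale YY_le; rewrite invr_ge0 ltW.
Qed.

Lemma lemx_conj_invmx_mul (sigma : R) (X C : 'M[R]_n) : M^T = M ->
  lemx (C *m C^T) sigma%:M -> sigma <= rho ^+ 2 ->
  lemx (X *m invmx M *m C *m (C^T *m invmx M *m X^T)) (X *m X^T).
Proof.
move=> M_sym CC_le sigma_le; set Y := X *m invmx M.
have -> : X *m invmx M *m C *m (C^T *m invmx M *m X^T) = Y *m (C *m C^T) *m Y^T.
  by rewrite /Y trmx_mul trmx_inv M_sym !mulmxA.
have CC_le' : lemx (C *m C^T) (rho ^+ 2)%:M.
  exact: lemx_trans CC_le (lemx_scalar sigma_le).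
apply: (lemx_trans (lemx_conj Y CC_le')).
have MM_le : lemx (rho ^+ 2 *: (invmx M *m (invmx M)^T)) 1%:M.
  have -> : 1%:M = rho ^+ 2 *: (rho ^- 2)%:M :> 'M[R]_n.
    by rewrite scale_scalar_mx mulfV ?expf_neq0 ?gt_eqF.
  by apply: lemx_scale lemx_invmx_mul_tr; rewrite exprn_ge0 ?ltW.
have -> : Y *m (rho ^+ 2)%:M *m Y^T =
          X *m (rho ^+ 2 *: (invmx M *m (invmx M)^T)) *m X^T.
  by rewrite /Y trmx_mul mul_mx_scalar -!scalemxAl -!scalemxAr !mulmxA scalemxAl.
by have := lemx_conj X MM_le; rewrite mulmx1.
Qed.

Lemma lemx_sub_conj_invmx_ge (lambda sigma : R) (A Y : 'M[R]_n) :
  lemx lambda%:M A -> lemx (Y *m Y^T) sigma%:M -> rho <= lambda - sigma / rho ->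
  lemx rho%:M (A - Y *m invmx M *m Y^T).
Proof.
move=> A_ge YY_le rho_le; apply: lemx_trans (lemx_scalar rho_le) _.
by rewrite raddfB /=; apply: lemxB A_ge (lemx_conj_invmx YY_le).
Qed.

End Inverse.

Section CircStarBlocks.
Variables (R : realFieldType) (n : nat) (O1 O2 : 'M[R]_(n + n)).
Let Mi := invmx (blk22 O1 + blk11 O2).

Let circ_starE : circ_star O1 O2 = block_mx
  (blk11 O1 - blk12 O1 *m Mi *m blk21 O1) (- (blk12 O1 *m Mi *m blk12 O2))
  (- (blk21 O2 *m Mi *m blk21 O1)) (blk22 O2 - blk21 O2 *m Mi *m blk12 O2).
Proof. by rewrite /circ_star mul_col_mx mul_col_row opp_block_mx add_block_mx !add0r. Qed.

Lemma blk11_circ_star : blk11 (circ_star O1 O2) = blk11 O1 - blk12 O1 *m Mi *m blk21 O1.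
Proof. by rewrite circ_starE /blk11 block_mxKul. Qed.

Lemma blk22_circ_star : blk22 (circ_star O1 O2) = blk22 O2 - blk21 O2 *m Mi *m blk12 O2.
Proof. by rewrite circ_starE /blk22 block_mxKdr. Qed.

Lemma blk12_circ_star : blk12 (circ_star O1 O2) = - (blk12 O1 *m Mi *m blk12 O2).
Proof. by rewrite circ_starE /blk12 block_mxKur. Qed.

Lemma blk21_circ_star : blk21 (circ_star O1 O2) = - (blk21 O2 *m Mi *m blk21 O1).
Proof. by rewrite circ_starE /blk21 block_mxKdl. Qed.

End CircStarBlocks.

Section SymmetricBlocks.
Variables (R : realFieldType) (n : nat) (O : 'M[R]_(n + n)).
Hypothesis O_sym : O^T = O.

Lemma trmx_blk11 : (blk11 O)^T = blk11 O.
Proof. by rewrite /blk11 trmx_ulsub O_sym. Qed.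

Lemma trmx_blk22 : (blk22 O)^T = blk22 O.
Proof. by rewrite /blk22 trmx_drsub O_sym. Qed.

Lemma trmx_blk12 : (blk12 O)^T = blk21 O.
Proof. by rewrite /blk12 trmx_ursub O_sym. Qed.

Lemma trmx_blk21 : (blk21 O)^T = blk12 O.
Proof. by rewrite -trmx_blk12 trmxK. Qed.

End SymmetricBlocks.

Section Iteration.
Variables (R : realFieldType) (n : nat) (Theta : nat -> 'M[R]_(n + n)) (p : nat).
Hypotheses (Theta_sym : forall k, (0 < k)%N -> (Theta k)^T = Theta k)
  (Theta_add : forall k1 k2, (0 < k1)%N -> (0 < k2)%N ->
     Theta (k1 + k2)%N = circ_star (Theta k1) (Theta k2))
  (p_gt0 : (0 < p)%N).
Variables (sigma lambda rho : R).
Hypotheses (sigma_ge0 : 0 <= sigma) (rho_gt0 : 0 < rho) (sigma_le : sigma <= rho ^+ 2)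
  (rho_le : rho <= lambda - sigma / rho)
  (H12 : lemx (blk12 (Theta p) *m blk21 (Theta p)) sigma%:M)
  (H21 : lemx (blk21 (Theta p) *m blk12 (Theta p)) sigma%:M)
  (Hdiag : lemx lambda%:M (blk11 (Theta p) + blk22 (Theta p))).

Let Theta_mul_gt0 k : (0 < k)%N -> (0 < k * p)%N.
Proof. by move=> k_gt0; rewrite muln_gt0 k_gt0. Qed.

Lemma Theta_succ_mulr k : (0 < k)%N ->
  Theta (k.+1 * p)%N = circ_star (Theta (k * p)%N) (Theta p).
Proof. by move=> k_gt0; rewrite mulSnr Theta_add ?Theta_mul_gt0. Qed.

Lemma Theta_succ_mull k : (0 < k)%N ->
  Theta (k.+1 * p)%N = circ_star (Theta p) (Theta (k * p)%N).
Proof. by move=> k_gt0; rewrite mulSn Theta_add ?Theta_mul_gt0. Qed.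

Lemma pivot_sym k1 k2 : (0 < k1)%N -> (0 < k2)%N ->
  (blk22 (Theta k1) + blk11 (Theta k2))^T = blk22 (Theta k1) + blk11 (Theta k2).
Proof. by move=> k1_gt0 k2_gt0; rewrite linearD /= trmx_blk22 ?trmx_blk11 ?Theta_sym. Qed.

Lemma pivot_lower_bound k : (0 < k)%N ->
  lemx rho%:M (blk22 (Theta (k * p)%N) + blk11 (Theta p)) /\
  lemx rho%:M (blk22 (Theta p) + blk11 (Theta (k * p)%N)).
Proof.
have Hdiag' : lemx lambda%:M (blk22 (Theta p) + blk11 (Theta p)) by rewrite addrC.
elim: k => [//|[_ _|k IHk _]].
  have rho_le_lambda : rho <= lambda.
    by apply: le_trans rho_le _; rewrite gerBl (divr_ge0 sigma_ge0 (ltW rho_gt0)).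
  by rewrite mul1n; split; apply: lemx_trans (lemx_scalar rho_le_lambda) Hdiag'.
have [IH1 IH2] := IHk isT; split.
- rewrite Theta_succ_mulr // blk22_circ_star -(trmx_blk21 (Theta_sym p_gt0)) addrAC.
  apply: (lemx_sub_conj_invmx_ge rho_gt0 IH1 Hdiag') rho_le.
  by rewrite trmx_blk21 ?Theta_sym.
- rewrite Theta_succ_mull // blk11_circ_star -(trmx_blk12 (Theta_sym p_gt0)) addrA.
  apply: (lemx_sub_conj_invmx_ge rho_gt0 IH2 Hdiag') rho_le.
  by rewrite trmx_blk12 ?Theta_sym.
Qed.

Lemma blk11_Theta_succ_le k : (0 < k)%N ->
  lemx (blk11 (Theta (k.+1 * p)%N)) (blk11 (Theta (k * p)%N)).
Proof.
move=> k_gt0; have kp_sym := Theta_sym (Theta_mul_gt0 k_gt0).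
rewrite Theta_succ_mulr // blk11_circ_star -(trmx_blk12 kp_sym).
exact: (lemx_sub_conj_invmx rho_gt0 (pivot_lower_bound k_gt0).1).
Qed.

Lemma blk22_Theta_succ_le k : (0 < k)%N ->
  lemx (blk22 (Theta (k.+1 * p)%N)) (blk22 (Theta (k * p)%N)).
Proof.
move=> k_gt0; have kp_sym := Theta_sym (Theta_mul_gt0 k_gt0).
rewrite Theta_succ_mull // blk22_circ_star -(trmx_blk21 kp_sym).
exact: (lemx_sub_conj_invmx rho_gt0 (pivot_lower_bound k_gt0).2).
Qed.

Lemma blk12_blk21_Theta_succ_le k : (0 < k)%N ->
  lemx (blk12 (Theta (k.+1 * p)%N) *m blk21 (Theta (k.+1 * p)%N))
       (blk12 (Theta (k * p)%N) *m blk21 (Theta (k * p)%N)).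
Proof.
move=> k_gt0; have kp_sym := Theta_sym (Theta_mul_gt0 k_gt0).
rewrite Theta_succ_mulr // blk12_circ_star blk21_circ_star mulNmx mulmxN opprK.
rewrite -(trmx_blk12 kp_sym) -(trmx_blk12 (Theta_sym p_gt0)).
apply: (lemx_conj_invmx_mul rho_gt0 (pivot_lower_bound k_gt0).1) sigma_le.
  exact: pivot_sym (Theta_mul_gt0 k_gt0) p_gt0.
by rewrite trmx_blk12 ?Theta_sym.
Qed.

Lemma blk21_blk12_Theta_succ_le k : (0 < k)%N ->
  lemx (blk21 (Theta (k.+1 * p)%N) *m blk12 (Theta (k.+1 * p)%N))
       (blk21 (Theta (k * p)%N) *m blk12 (Theta (k * p)%N)).
Proof.
move=> k_gt0; have kp_sym := Theta_sym (Theta_mul_gt0 k_gt0).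
rewrite Theta_succ_mull // blk12_circ_star blk21_circ_star mulNmx mulmxN opprK.
rewrite -(trmx_blk21 kp_sym) -(trmx_blk21 (Theta_sym p_gt0)).
apply: (lemx_conj_invmx_mul rho_gt0 (pivot_lower_bound k_gt0).2) sigma_le.
  exact: pivot_sym p_gt0 (Theta_mul_gt0 k_gt0).
by rewrite trmx_blk21 ?Theta_sym.
Qed.

Lemma Theta_blocks_succ_le k : (0 < k)%N ->
  lemx (blk11 (Theta (k.+1 * p)%N)) (blk11 (Theta (k * p)%N)) /\
  lemx (blk22 (Theta (k.+1 * p)%N)) (blk22 (Theta (k * p)%N)) /\
  lemx (blk12 (Theta (k.+1 * p)%N) *m blk21 (Theta (k.+1 * p)%N))
       (blk12 (Theta (k * p)%N) *m blk21 (Theta (k * p)%N)) /\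
  lemx (blk21 (Theta (k.+1 * p)%N) *m blk12 (Theta (k.+1 * p)%N))
       (blk21 (Theta (k * p)%N) *m blk12 (Theta (k * p)%N)).
Proof.
move=> k_gt0; split; first exact: blk11_Theta_succ_le.
split; first exact: blk22_Theta_succ_le.
by split; [apply: blk12_blk21_Theta_succ_le | apply: blk21_blk12_Theta_succ_le].
Qed.

End Iteration.

Lemma theorem4p3_constants (R : realFieldType) (sigma lambda rho : R) :
  0 < sigma -> 0 < rho -> rho ^- 2 * sigma < 1 ->
  rho <= lambda - 2 * rho^-1 * sigma * (1 - rho ^- 2 * sigma)^-1 ->
  sigma <= rho ^+ 2 /\ rho <= lambda - sigma / rho.
Proof.
move=> sigma_gt0 rho_gt0 x_lt1 rho_le; split.
  by move: x_lt1; rewrite mulrC ltr_pdivrMr ?exprn_gt0 // mul1r => /ltW.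
have a_gt0 : 0 < rho^-1 * sigma by rewrite mulr_gt0 ?invr_gt0.
have x_gt0 : 0 < rho ^- 2 * sigma by rewrite mulr_gt0 ?invr_gt0 ?exprn_gt0.
have t_ge1 : 1 <= (1 - rho ^- 2 * sigma)^-1 by rewrite invf_ge1; lra.
apply: le_trans rho_le _; rewrite mulrC lerB // -mulrA; nra.
Qed.

Theorem theorem4p3 (R : realFieldType) (n : nat)
  (Theta : nat -> 'M[R]_(n + n))
  (Hsym : forall k, (0 < k)%N -> (Theta k)^T = Theta k)
  (Hsemi : forall k1 k2, (0 < k1)%N -> (0 < k2)%N ->
     posdefmx (blk22 (Theta k1) + blk11 (Theta k2)) /\
     Theta (k1 + k2)%N = circ_star (Theta k1) (Theta k2))
  (sigma lambda rho : R)
  (Hsigma : 0 < sigma) (Hlambda : 0 < lambda) (Hrho : 0 < rho)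
  (Hs1 : rho ^- 2 * sigma < 1)
  (Hrl : rho <= lambda - 2 * rho^-1 * sigma * (1 - rho ^- 2 * sigma)^-1)
  (p : nat) (Hp : (0 < p)%N)
  (H12 : lemx (blk12 (Theta p) *m blk21 (Theta p)) (sigma%:M))
  (H21 : lemx (blk21 (Theta p) *m blk12 (Theta p)) (sigma%:M))
  (Hdiag : lemx (lambda%:M) (blk11 (Theta p) + blk22 (Theta p))) :
  forall k : nat, (0 < k)%N ->
    lemx (blk11 (Theta (k.+1 * p)%N)) (blk11 (Theta (k * p)%N)) /\
    lemx (blk22 (Theta (k.+1 * p)%N)) (blk22 (Theta (k * p)%N)) /\
    lemx (blk12 (Theta (k.+1 * p)%N) *m blk21 (Theta (k.+1 * p)%N))
         (blk12 (Theta (k * p)%N) *m blk21 (Theta (k * p)%N)) /\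
    lemx (blk21 (Theta (k.+1 * p)%N) *m blk12 (Theta (k.+1 * p)%N))
         (blk21 (Theta (k * p)%N) *m blk12 (Theta (k * p)%N)).
Proof.
have Hadd k1 k2 (k1_gt0 : (0 < k1)%N) (k2_gt0 : (0 < k2)%N) :=
  (Hsemi k1 k2 k1_gt0 k2_gt0).2.
have [sigma_le rho_le] := theorem4p3_constants Hsigma Hrho Hs1 Hrl.
exact: (Theta_blocks_succ_le Hsym Hadd Hp (ltW Hsigma) Hrho sigma_le rho_le H12 H21 Hdiag).
Qed.
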